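(* For all integers $n\ge1$, $k\ge0$ and every sequence $\boldsymbol a$ of positive reals, \[ \theta_{n;k}(t)=\frac1{k!}B_k\big(x_1,\dots,x_k\big),\qquad x_\ell=(\ell-1)!\,A_n(\ell)\big(t^\ell-(t-1)^\ell\big), \] equivalently \[ \theta_{n;k}(t)=\sum_{\substack{m_1,m_2,\ldots\ge0\\ m_1+2m_2+3m_3+\cdots=k}}\ \prod_{i\ge1}\frac{1}{m_i!}\Big(\frac{A_n(i)\,(t^i-(t-1)^i)}{i}\Big)^{m_i}. \]
   Context: Let $\boldsymbol a=(a_j)_{j\ge1}$ be a sequence of positive reals. For integers $n\ge1$, $k\ge0$ let $\mathcal M_{n,k}=\{(\ell_1,\dots,\ell_k)\in\mathbb N^k: n\ge\ell_1\ge\cdots\ge\ell_k\ge1\}$. For $\vec\ell\in\mathcal M_{n,k}$ let $\sigma(\vec\ell)=|\{1\le j\le k-1:\ell_j=\ell_{j+1}\}|$ and $w(\vec\ell)=\prod_{j=1}^k a_{\ell_j}$. Define $\theta_{n;k}(t)=\sum_{\vec\ell\in\mathcal M_{n,k}}w(\vec\ell)\,t^{\sigma(\vec\ell)}$, with $\theta_{n;0}(t)=1$, and $A_n(j)=\sum_{m=1}^n a_m^j$. The complete Bell polynomials $B_j$ are defined by $\exp\big(\sum_{\ell\ge1}x_\ell z^\ell/\ell!\big)=\sum_{j\ge0}B_j(x_1,\dots,x_j)z^j/j!$. *)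

From HB Require Import structures.
From mathcomp Require Import all_boot all_order all_algebra.
Set Implicit Arguments. Unset Strict Implicit. Unset Printing Implicit Defensive.
Import Order.TTheory GRing.Theory Num.Theory.
Local Open Scope ring_scope.

Definition sigma (s : seq nat) : nat :=
  (\sum_(j < (size s).-1) (nth 0 s j == nth 0 s j.+1))%N.

(* M_{n,k}: an element l of 'I_n^k encodes (l_1+1, ..., l_k+1) in [1,n]^k,
   required to be weakly decreasing.  The sequence a is indexed from 1
   (a 0 is irrelevant). *)
Definition theta (R : realFieldType) (a : nat -> R) (n k : nat) (t : R) : R :=
  \sum_(l : k.-tuple 'I_n | sorted (fun x y : 'I_n => (y <= x)%N) l)
    (\prod_(i <- l) a (val i).+1) * t ^+ sigma (map (fun i : 'I_n => (val i).+1) l).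

Definition Asum (R : realFieldType) (a : nat -> R) (n j : nat) : R :=
  \sum_(1 <= m < n.+1) a m ^+ j.

(* Complete Bell polynomial B_k(x_1,...,x_k) read off from the generating
   function exp(sum_l x_l z^l / l!): since f := sum_{l>=1} x_l z^l/l! has no
   constant term, the coefficient of z^k in exp(f) equals that of
   sum_{m=0}^k f^m/m!, and only the terms l <= k of f matter. *)
Definition bell (R : realFieldType) (k : nat) (x : nat -> R) : R :=
  let f : {poly R} := \sum_(1 <= l < k.+1) (x l / (l`!)%:R) *: 'X^l in
  (k`!)%:R * (\sum_(m < k.+1) ((m`!)%:R)^-1 *: f ^+ m)`_k.

From HB Require Import structures.
From mathcomp Require Import all_boot all_order all_algebra.
From mathcomp Require Import zify ring.
Import Order.TTheory GRing.Theory Num.Theory.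
Local Open Scope ring_scope.
Set Implicit Arguments. Unset Strict Implicit. Unset Printing Implicit Defensive.

(* Proof strategy.
   theta_{n;k}(t) is the coefficient of z^k in H_n(z) = prod_(m=1..n) h_m(z),
   where h_m(z) = 1 + sum_(j>=1) a_m^j t^(j-1) z^j: a weakly decreasing
   sequence is a concatenation of blocks of n's, (n-1)'s, ..., 1's, and a
   block of j >= 1 equal entries contributes a_m^j and j-1 equalities.
   Each h_m has an explicit logarithmic derivative,
   z h_m'/h_m = sum_l a_m^l (t^l - (t-1)^l) z^l, so z H_n'/H_n = Q_n(z) with
   Q_n(z) = sum_l A_n(l) (t^l - (t-1)^l) z^l.  The two right-hand sides are
   the z^k-coefficients of exp(sum_l x_l z^l / l!) (the Bell form) and of
   prod_i exp(A_n(i) (t^i - (t-1)^i) z^i / i) (the multiplicity form); both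
   series have constant term 1 and logarithmic derivative Q_n as well.
   Since X f' = f Q with Q(0) = 0 determines f from f(0), the three
   coefficients agree. *)

Section TruncatedLogDerivative.
Variable R : realFieldType.
Implicit Types p q f g : {poly R}.

Definition agree K p q := forall i, (i <= K)%N -> p`_i = q`_i.

(* X f' = f q modulo X^(K+1): q is (X times) the logarithmic derivative of f,
   as far as degree K is concerned. *)
Definition logder K f q := agree K ('X * f^`()) (f * q).

Lemma agreeMr K p q r : agree K p q -> agree K (p * r) (q * r).
Proof.
move=> hpq i hi; rewrite !coefM; apply: eq_bigr => j _; rewrite hpq //.
by apply: leq_trans hi; rewrite -ltnS.
Qed.

Lemma agreeD K p1 p2 q1 q2 :
  agree K p1 q1 -> agree K p2 q2 -> agree K (p1 + p2) (q1 + q2).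
Proof. by move=> h1 h2 i hi; rewrite !coefD h1 ?h2. Qed.

Lemma logderM K f g q1 q2 :
  logder K f q1 -> logder K g q2 -> logder K (f * g) (q1 + q2).
Proof.
move=> hf hg; rewrite /logder derivM mulrDr.
have -> : f * g * (q1 + q2) = f * q1 * g + g * q2 * f by ring.
apply: agreeD; first by rewrite mulrA; apply: agreeMr.
have -> : 'X * (f * g^`()) = 'X * g^`() * f by ring.
exact: agreeMr.
Qed.

Lemma logder_prod K I (r : seq I) (F Q : I -> {poly R}) :
  (forall i, logder K (F i) (Q i)) ->
  logder K (\prod_(i <- r) F i) (\sum_(i <- r) Q i).
Proof.
move=> hFQ; elim: r => [|x r IH]; rewrite ?big_nil ?big_cons; last exact: logderM.
by move=> i _; rewrite mulr0 -polyC1 derivC mulr0.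
Qed.

Lemma logder_agree K f q q' : logder K f q -> agree K q q' -> logder K f q'.
Proof. by move=> hf hq i hi; rewrite hf // !(mulrC f) (agreeMr f hq). Qed.

Lemma logder_unique K f g q : q`_0 = 0 ->
  logder K f q -> logder K g q -> f`_0 = g`_0 -> agree K f g.
Proof.
move=> q0 hf hg fg0 i; elim: i {-2}i (leqnn i) => [|m IH] i hi hiK.
  by move: hi; rewrite leqn0 => /eqP->.
have [/IH -> //|hge] := ltnP i m.+1.
have -> : i = m.+1 by apply/eqP; rewrite eqn_leq hi hge.
have ef := hf m.+1 (leq_trans hge hiK); have eg := hg m.+1 (leq_trans hge hiK).
rewrite coefXM coef_deriv coefM big_ord_recr /= subnn q0 mulr0 addr0 in ef.
rewrite coefXM coef_deriv coefM big_ord_recr /= subnn q0 mulr0 addr0 in eg.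
apply: (@pmulrnI R m.+1) => //; rewrite ef eg.
by apply: eq_bigr => j _; rewrite IH //; have := ltn_ord j; lia.
Qed.

Definition vanish m p := forall i, (i < m)%N -> p`_i = 0.

Lemma vanishM p q m1 m2 : vanish m1 p -> vanish m2 q -> vanish (m1 + m2) (p * q).
Proof.
move=> hp hq i hi; rewrite coefM big1 // => j _.
have [jm1|jm1] := ltnP j m1; first by rewrite hp ?mul0r.
by rewrite hq ?mulr0 //; have := ltn_ord j; lia.
Qed.

Lemma vanishX f m : vanish 1 f -> vanish m (f ^+ m).
Proof.
by move=> hf; elim: m => [//|m IH]; rewrite exprS -add1n; apply: vanishM.
Qed.

Lemma vanish1 f : f`_0 = 0 -> vanish 1 f.
Proof. by move=> f0 i; rewrite ltnS leqn0 => /eqP->. Qed.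

Lemma natr_fact_neq0 m : (m`!)%:R != 0 :> R.
Proof. by rewrite pnatr_eq0 -lt0n fact_gt0. Qed.

(* The exponential of f truncated at degree K (exact up to degree K
   when f(0) = 0). *)
Definition texp K f : {poly R} := \sum_(m < K.+1) ((m`!)%:R)^-1 *: f ^+ m.

Lemma texp_coef0 K f : f`_0 = 0 -> (texp K f)`_0 = 1.
Proof.
move=> f0; rewrite coef_sum big_ord_recl big1 ?addr0.
  by rewrite expr0 coefZ coefC /= invr1 mulr1.
by move=> i _; rewrite coefZ (vanishX (vanish1 f0)) ?mulr0.
Qed.

Lemma logder_texp K f : f`_0 = 0 -> logder K (texp K f) ('X * f^`()).
Proof.
move=> f0; rewrite /logder /texp raddf_sum /=.
have -> : \sum_(i < K.+1) (((i`!)%:R)^-1 *: f ^+ i)^`() =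
          (\sum_(i < K) ((i`!)%:R)^-1 *: f ^+ i) * f^`().
  rewrite big_ord_recl /= derivZ deriv_exp mulr0n scaler0 add0r mulr_suml.
  apply: eq_bigr => i _; rewrite derivZ deriv_exp /= factS natrM invfM.
  rewrite -scaler_nat scalerA mulrAC mulVf ?pnatr_eq0 // mul1r.
  by rewrite -scalerAl mulrC.
set S := \sum_(i < K) _.
rewrite big_ord_recr /= -/S mulrDl.
have -> : 'X * (S * f^`()) = S * ('X * f^`()) + 0 by ring.
apply: agreeD => // i hi; rewrite coef0 -scalerAl coefZ.
have top : vanish (K + 1) (f ^+ K * ('X * f^`())).
  by apply: vanishM; [apply: vanishX; apply: vanish1 | move=> [|//] _; rewrite coefXM].
by rewrite top ?mulr0 // addn1.
Qed.

End TruncatedLogDerivative.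

Fixpoint adj_eq (s : seq nat) : nat :=
  if s is x :: ((y :: _) as r) then ((x == y) + adj_eq r)%N else 0%N.

Lemma sigmaE s : sigma s = adj_eq s.
Proof.
elim: s => [|x [|y s] IH]; rewrite /sigma ?big_ord0 //.
by rewrite -[adj_eq _]/((x == y) + adj_eq (y :: s))%N -IH big_ord_recl.
Qed.

Definition ge_nat (x y : nat) : bool := (y <= x)%N.

Lemma ge_nat_trans : transitive ge_nat.
Proof. by move=> x y z h1 h2; apply: leq_trans h2 h1. Qed.

Fixpoint decseqs (n k : nat) : seq (seq nat) :=
  if n is n'.+1 then
    [seq nseq j n ++ s | j <- index_iota 0 k.+1, s <- decseqs n' (k - j)]
  else if k is 0 then [:: [::]] else [::].

Lemma sorted_nseq_cat j y s : all (fun x => x <= y)%N s -> sorted ge_nat s ->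
  sorted ge_nat (nseq j y ++ s).
Proof.
move=> sy hs; elim: j => [//|j IH] /=.
rewrite (path_sortedE ge_nat_trans) IH andbT all_cat sy andbT.
by rewrite all_nseq /ge_nat leqnn orbT.
Qed.

Lemma sorted_block_split n s : all (fun x => x <= n.+1)%N s -> sorted ge_nat s ->
  exists j s', [/\ s = nseq j n.+1 ++ s', all (fun x => x <= n)%N s' & sorted ge_nat s'].
Proof.
elim: s => [|x s IH] /=; first by exists 0%N, [::].
move=> /andP[hx hs] hp; have ss := path_sorted hp.
move: hp; rewrite (path_sortedE ge_nat_trans) => /andP[xs _].
have [->|nx] := eqVneq x n.+1.
  by have [j [s' [-> ? ?]]] := IH hs ss; exists j.+1, s'.
have xn : (x <= n)%N by rewrite -ltnS ltn_neqAle nx.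
exists 0%N, (x :: s); split => //=; last by rewrite (path_sortedE ge_nat_trans) xs.
by rewrite xn; apply/allP => y /(allP xs) yx; apply: leq_trans yx xn.
Qed.

Lemma mem_decseqs n k s : (s \in decseqs n k) =
  [&& size s == k, all (fun x => 0 < x <= n)%N s & sorted ge_nat s].
Proof.
elim: n k s => [|n IH] k s.
  by case: k => [|k]; case: s => [|[|x] s] //=; rewrite ?inE //= andbF.
apply/allpairsPdep/idP.
  move=> [j [s' [hj hs' ->]]]; move: hs'; rewrite IH => /and3P[/eqP sz al so].
  move: hj; rewrite mem_index_iota => /andP[_ jk].
  rewrite size_cat size_nseq sz all_cat all_nseq /= leqnn orbT /=.
  apply/and3P; split; first by apply/eqP; lia.
    by apply: sub_all al => y /andP[-> /leqW].
  by apply: sorted_nseq_cat => //; apply: sub_all al => y /andP[_ /leqW].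
move=> /and3P[/eqP sz al so].
have al1 : all (fun x => x <= n.+1)%N s by apply: sub_all al => y /andP[].
have [j [s' [e al' so']]] := sorted_block_split al1 so.
have szs : (j + size s')%N = k by rewrite -sz e size_cat size_nseq.
exists j, s'; split => //; first by rewrite mem_index_iota; lia.
rewrite IH so' andbT -szs addKn eqxx /=.
apply/allP => y ys'; rewrite (allP al' y ys') andbT.
by have /andP[] : (0 < y <= n.+1)%N by apply: (allP al); rewrite e mem_cat ys' orbT.
Qed.

(* ... without repetition: the length of the leading block of n's is determined
   by the sequence. *)
Lemma uniq_decseqs n k : uniq (decseqs n k).
Proof.
elim: n k => [|n IH] k; first by case: k.
apply: allpairs_uniq_dep => [|j _|]; [exact: iota_uniq | exact: IH |].
move=> [j1 s1] [j2 s2] /allpairsPdep[x1 [y1 [_ h1 [e1 e1']]]].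
move=> /allpairsPdep[x2 [y2 [_ h2 [e2 e2']]]] /= e; subst x1 x2 y1 y2.
have no_top j s' : s' \in decseqs n (k - j) -> count (pred1 n.+1) s' = 0%N.
  rewrite mem_decseqs => /and3P[_ al _]; apply/eqP; rewrite -leqn0 leqNgt -has_count.
  by apply/hasPn => y /(allP al) /andP[_ yn] /=; rewrite neq_ltn ltnS yn.
have ej : j1 = j2.
  have := congr1 (count (pred1 n.+1)) e.
  by rewrite !count_cat !count_nseq /= eqxx !mul1n (no_top _ _ h1) (no_top _ _ h2) !addn0.
by subst j2; move/eqP: e; rewrite eqseq_cat ?size_nseq // eqxx => /eqP->.
Qed.

Section SequenceWeights.
Variable R : realFieldType.
Variables (a : nat -> R) (t : R).

Definition weight (s : seq nat) : R := (\prod_(x <- s) a x) * t ^+ adj_eq s.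

Definition block (m j : nat) : R := if j is j'.+1 then a m ^+ j * t ^+ j' else 1.

Definition theta_seq (n k : nat) : R := \sum_(s <- decseqs n k) weight s.

Lemma adj_eq_nseq_cat j y s : y \notin s ->
  adj_eq (nseq j.+1 y ++ s) = (j + adj_eq s)%N.
Proof.
move=> ys; elim: j => [|j IH].
  by case: s ys => [|z s] //=; rewrite inE eq_sym => /norP[/negbTE-> _].
by rewrite -[LHS]/((y == y) + adj_eq (nseq j.+1 y ++ s))%N IH eqxx add1n.
Qed.

Lemma weight_cat j n s : all (fun x => x <= n)%N s ->
  weight (nseq j n.+1 ++ s) = block n.+1 j * weight s.
Proof.
move=> sn; rewrite /weight big_cat big_nseq iter_mulr_1.
case: j => [|j]; first by rewrite /= expr0 !mul1r.
rewrite adj_eq_nseq_cat /=; last by apply/negP => /(allP sn); rewrite ltnn.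
by rewrite exprD; ring.
Qed.

Lemma theta_seq_rec n k :
  theta_seq n.+1 k = \sum_(j < k.+1) block n.+1 j * theta_seq n (k - j).
Proof.
rewrite /theta_seq big_allpairs_dep /= big_mkord.
apply: eq_bigr => j _; rewrite big_distrr /=; apply: eq_big_seq => s.
rewrite mem_decseqs => /and3P[_ sn _]; rewrite weight_cat //.
by apply: sub_all sn => x /andP[].
Qed.

Lemma theta_seq0 k : theta_seq 0 k = (k == 0%N)%:R.
Proof.
by case: k => [|k]; rewrite /theta_seq /= ?big_nil // big_seq1 /weight big_nil mul1r.
Qed.

Lemma theta_seq_n0 n : theta_seq n 0 = 1.
Proof.
elim: n => [|n IH]; first by rewrite theta_seq0.
by rewrite theta_seq_rec big_ord1 IH mulr1.
Qed.

End SequenceWeights.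

(* theta, defined by a sum over decreasing tuples of 'I_n, is theta_seq:
   shifting the entries by one is a bijection onto decseqs n k. *)
Lemma theta_seqE (R : realFieldType) (a : nat -> R) t n k :
  theta a n.+1 k t = theta_seq a t n.+1 k.
Proof.
pose g (i : 'I_n.+1) := (val i).+1.
have g_inj : injective g by move=> i j /succn_inj /val_inj.
rewrite /theta (eq_bigr (fun l : k.-tuple 'I_n.+1 => weight a t (map g l))); last first.
  by move=> l _; rewrite /weight big_map sigmaE.
rewrite -big_filter -(big_map (fun l : k.-tuple 'I_n.+1 => map g l) xpredT).
apply: perm_big; apply: uniq_perm.
- rewrite map_inj_uniq ?filter_uniq ?index_enum_uniq //.
  by move=> l1 l2 /(inj_map g_inj) /val_inj.
- exact: uniq_decseqs.
move=> s; rewrite mem_decseqs; apply/mapP/idP.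
  move=> [l + ->]; rewrite mem_filter => /andP[ls _].
  rewrite size_map size_tuple eqxx /= sorted_map.
  apply/andP; split; first by apply/allP => y /mapP[i _ ->]; rewrite ltn_ord.
  by rewrite (@eq_sorted _ _ (fun x y : 'I_n.+1 => (val y <= val x)%N)).

move=> /and3P[/eqP sz sn ss].
pose h (x : nat) : 'I_n.+1 := inord x.-1.
have szh : size (map h s) == k by rewrite size_map sz.
have ghs : map g (map h s) = s.
  rewrite -map_comp -[RHS]map_id; apply/eq_in_map => x /(allP sn) /= xn.
  by rewrite /g /h /= inordK; lia.
exists (Tuple szh); last by rewrite /= ghs.
rewrite mem_filter mem_index_enum andbT /=.
apply: (homo_sorted_in (P := fun x => (0 < x <= n.+1)%N)) ss => //.
by move=> x y hx hy; rewrite /ge_nat /h !inordK; move: hx hy; rewrite !unfold_in /=; lia.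
Qed.

Section GeneratingFunction.
Variable R : realFieldType.
Variables (a : nat -> R) (t : R) (K : nat).

Definition tdiff (l : nat) : R := t ^+ l - (t - 1) ^+ l.

Definition blockgf (m : nat) : {poly R} := \poly_(j < K.+1) block a t m j.

Definition blockld (m : nat) : {poly R} := \poly_(l < K.+1) (a m ^+ l * tdiff l).

Definition genfun (n : nat) : {poly R} := \prod_(m < n) blockgf m.+1.
Definition logsum (n : nat) : {poly R} := \poly_(l < K.+1) (Asum a n l * tdiff l).

Lemma coef_genfun n i : (i <= K)%N -> (genfun n)`_i = theta_seq a t n i.
Proof.
elim: n i => [|n IH] i iK.
  by rewrite /genfun big_ord0 coef1 theta_seq0.
rewrite /genfun big_ord_recr /= -/(genfun n) coefM theta_seq_rec.
rewrite (reindex_inj rev_ord_inj); apply: eq_bigr => j _ /=.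
have jlt := ltn_ord j; rewrite coef_poly ifT; last by lia.
rewrite subSS (subKn (ltnSE jlt)) IH 1?mulrC //; lia.
Qed.

Lemma theta_genfun n : theta a n.+1 K t = (genfun n.+1)`_K.
Proof. by rewrite theta_seqE coef_genfun. Qed.

(* The convolution identity behind the logarithmic derivative of blockgf:
   (t^(j+1) - (t-1)^(j+1)) + sum_(r <= j) t^r (t^(j-r) - (t-1)^(j-r)) = (j+1) t^j. *)
Lemma tdiff_conv j :
  tdiff j.+1 + \sum_(r < j.+1) t ^+ r * tdiff (j - r) = t ^+ j *+ j.+1.
Proof.
elim: j => [|j IH].
  by rewrite big_ord1 /tdiff subnn !expr0 !expr1 mulr1n; ring.
rewrite big_ord_recl subn0.
rewrite (eq_bigr (fun r : 'I_j.+1 => t * (t ^+ r * tdiff (j - r)))); last first.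
  by move=> r _; rewrite /= /bump /= subSS exprS mulrA.
rewrite -big_distrr /= expr0 mul1r.
have -> : \sum_(r < j.+1) t ^+ r * tdiff (j - r) = t ^+ j *+ j.+1 - tdiff j.+1.
  by rewrite -IH addrAC subrr add0r.
by rewrite /tdiff !exprS !mulrS -mulrnAr; ring.
Qed.

Lemma logder_blockgf m : logder K (blockgf m) (blockld m).
Proof.
move=> [|i] iK; rewrite coefXM coefM.
  by rewrite big_ord1 !coef_poly /= /tdiff !expr0 subrr !mulr0.
rewrite coef_deriv coef_poly ifT; last by lia.
rewrite big_ord_recl /= subn0 !coef_poly ltn0Sn /= ifT; last by lia.
rewrite (eq_bigr (fun r : 'I_i.+1 => a m ^+ i.+1 * (t ^+ r * tdiff (i - r)))).
  by rewrite -big_distrr /= mul1r -mulrDr tdiff_conv /block mulrnAr.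
move=> r _; have rlt := ltn_ord r.
rewrite /= /bump /= add1n subSS !coef_poly ifT; last by lia.
rewrite ifT; last by lia.
have -> : a m ^+ i.+1 = a m ^+ r.+1 * a m ^+ (i - r).
  by rewrite -exprD; congr (_ ^+ _); lia.
by rewrite /block; ring.
Qed.

Lemma logsumE n : logsum n = \sum_(m < n) blockld m.+1.
Proof.
apply/polyP => i; rewrite coef_sum coef_poly.
under eq_bigr => m _ do rewrite coef_poly.
case: ifP => _; last by rewrite big1.
by rewrite -big_distrl /= /Asum big_add1 /= big_mkord.
Qed.

Lemma logder_genfun n : logder K (genfun n) (logsum n).
Proof. by rewrite logsumE; apply: logder_prod => m; apply: logder_blockgf. Qed.

Lemma logsum_coef0 n : (logsum n)`_0 = 0.
Proof. by rewrite coef_poly /= /tdiff !expr0 subrr mulr0. Qed.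

Lemma genfun_unique (n : nat) (f : {poly R}) :
  f`_0 = 1 -> logder K f (logsum n) -> f`_K = (genfun n)`_K.
Proof.
move=> f0 hf; apply: (logder_unique (logsum_coef0 n) hf (logder_genfun n)) => //.
by rewrite f0 coef_genfun // theta_seq_n0.
Qed.

End GeneratingFunction.

Lemma bellE (R : realFieldType) (k : nat) (x : nat -> R) :
  bell k x = (k`!)%:R * (texp k (\sum_(1 <= l < k.+1) (x l / (l`!)%:R) *: 'X^l))`_k.
Proof. by []. Qed.

(* First form: exp(sum_l x_l z^l / l!) has logarithmic derivative
   sum_l A_n(l) (t^l - (t-1)^l) z^l, hence equals the generating function. *)
Lemma bell_genfun (R : realFieldType) (a : nat -> R) (t : R) (n k : nat) :
  bell k (fun l => ((l.-1)`!)%:R * Asum a n l * (t ^+ l - (t - 1) ^+ l)) =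
  (k`!)%:R * (genfun a t k n)`_k.
Proof.
rewrite bellE; set f := \sum_(1 <= l < k.+1) _; congr (_ * _).
have f0 : f`_0 = 0.
  rewrite /f coef_sum big1_seq // => l; rewrite mem_index_iota => /andP[_ /andP[l0 _]].
  by rewrite coefZ coefXn eq_sym (gtn_eqF l0) mulr0.
apply: genfun_unique; first exact: texp_coef0.
apply: (logder_agree (logder_texp (K:=k) f0)) => -[|i] ik.
  by rewrite coefXM logsum_coef0.
rewrite coefXM /logsum coef_poly ltnS ik coef_deriv /f coef_sum /=.
rewrite (eq_bigr (fun l => if l == i.+1 then
    (l.-1)`!%:R * Asum a n l * (t ^+ l - (t - 1) ^+ l) / l`!%:R else 0)); last first.
  by move=> l _; rewrite coefZ coefXn eq_sym; case: eqP; rewrite ?mulr1 ?mulr0.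
rewrite -big_mkcond big_nat1_eq ifT; last by apply/andP; split; lia.
rewrite /tdiff /= factS natrM -mulr_natr; field.
by rewrite natr_fact_neq0 addrC natr1 pnatr_eq0.
Qed.

Lemma coef_prod_texp_monomials (R : realFieldType) (k : nat) (b : 'I_k -> R) :
  (\prod_(i < k) texp k (b i *: 'X^(i.+1)))`_k =
  \sum_(m : {ffun 'I_k -> 'I_k.+1} | (\sum_(i < k) (i.+1 * m i))%N == k)
    \prod_(i < k) ((((m i)`!)%:R)^-1 * b i ^+ (m i : nat)).
Proof.
rewrite /texp bigA_distr_bigA coef_sum [RHS]big_mkcond /=; apply: eq_bigr => m _.
have -> : \prod_(i < k) ((((m i)`!)%:R)^-1 *: (b i *: 'X^(i.+1)) ^+ m i) =
   (\prod_(i < k) ((((m i)`!)%:R)^-1 * b i ^+ m i)) *: 'X^(\sum_(i < k) i.+1 * m i).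
  rewrite -mul_polyC rmorph_prod -prodrXr -big_split /=; apply: eq_bigr => i _.
  by rewrite exprZn scalerA exprM mul_polyC.
by rewrite coefZ coefXn eq_sym; case: eqP; rewrite ?mulr1 ?mulr0.
Qed.

(* Second form: the exponential of sum_i A_n(i) (t^i - (t-1)^i) z^i / i,
   written as a product over i, has the same logarithmic derivative. *)
Lemma prod_texp_genfun (R : realFieldType) (a : nat -> R) (t : R) (n k : nat) :
  let b (i : 'I_k) := Asum a n i.+1 * (t ^+ i.+1 - (t - 1) ^+ i.+1) / (i.+1)%:R in
  (\prod_(i < k) texp k (b i *: 'X^(i.+1)))`_k = (genfun a t k n)`_k.
Proof.
move=> b; have b0 i : (b i *: 'X^(i.+1))`_0 = 0 by rewrite coefZ coefXn mulr0.
apply: genfun_unique.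
  by rewrite coef0_prod big1 // => i _; apply: texp_coef0.
apply: (logder_agree (logder_prod _ (fun i => logder_texp (K:=k) (b0 i)))) => -[|l] lk.
  by rewrite coef_sum big1 => [|i _]; rewrite ?coefXM // coef_poly /tdiff !expr0 subrr mulr0.
rewrite coef_sum coef_poly ltnS lk (bigD1 (Ordinal lk)) //= big1 ?addr0.
  rewrite coefXM /= derivZ derivXn /= coefZ coefMn coefXn eqxx /b /tdiff /=.
  by rewrite divfK // pnatr_eq0.
move=> i /negPf il; rewrite coefXM /= derivZ derivXn /= coefZ coefMn coefXn.
by rewrite -(inj_eq val_inj) /= eq_sym in il; rewrite il mul0rn mulr0.
Qed.

Unset Implicit Arguments.

Theorem mainTheorem3 (R : realFieldType) (a : nat -> R)
  (ha : forall j : nat, (0 < j)%N -> 0 < a j) (n k : nat) (hn : (1 <= n)%N) (t : R) :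
  theta a n k t =
    ((k`!)%:R)^-1 *
      bell k (fun l => ((l.-1)`!)%:R * Asum a n l * (t ^+ l - (t - 1) ^+ l))
  /\
  theta a n k t =
    \sum_(m : {ffun 'I_k -> 'I_k.+1} | (\sum_(i < k) (i.+1 * m i))%N == k)
      \prod_(i < k)
        ((((m i)`!)%:R)^-1 *
         (Asum a n i.+1 * (t ^+ i.+1 - (t - 1) ^+ i.+1) / (i.+1)%:R) ^+ (m i : nat)).
Proof.
case: n hn => [//|n] _; rewrite theta_genfun; split.
  by rewrite bell_genfun mulKf ?natr_fact_neq0.
by rewrite -prod_texp_genfun coef_prod_texp_monomials.
Qed.
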